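(* In the setting below, $$\sum_{\ell\in P^*}\bigl(|\Psi_+(\ell)|+|\Psi_{k+1}(\ell)|\bigr)=O(mr),$$ where the implied constant depends only on $\rho$, $c$ and $C$.
   Context: Let $P^*$ be a set of $m$ non-vertical lines in the plane, $\rho\ge 2$ and $c,C\ge1$ constants, $1\le r\le m$, and $k$ the integer with $\rho^{k-1}<r\le\rho^k$. Let $\Xi_0,\dots,\Xi_k,\Xi_{k+1}$ be a hierarchy of cuttings: $\Xi_0=\{\mathbb{R}^2\}$; for each $1\le i\le k+1$, $\Xi_i$ is a finite collection of closed triangles (''cells'') with pairwise disjoint interiors covering the plane, each cell of $\Xi_i$ is contained in a unique cell of $\Xi_{i-1}$ (its parent; it is a child of the parent), and every cell of $\Xi_{i-1}$ is the union of its children. A line crosses a cell if it meets its interior. Moreover: for $1\le i\le k$, $|\Xi_i|\le C\rho^{2i}$, each cell of $\Xi_{i-1}$ has at most $c$ children in $\Xi_i$, and each cell of $\Xi_i$ is crossed by at most $m/\rho^i$ lines of $P^*$; and $|\Xi_{k+1}|\le Cr^2$. For $\ell\in P^*$: $\Psi(\ell)$ is the set of cells of $\Xi_0,\dots,\Xi_k$ crossed by $\ell$; $\Psi_{k+1}(\ell)$ is the set of cells of $\Xi_{k+1}$ crossed by $\ell$; $\Psi_+(\ell)$ is the set of cells that are children of some cell of $\Psi(\ell)$ and lie completely above $\ell$ (contained in the closed half-plane above $\ell$ and not crossed by $\ell$). *)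

From HB Require Import structures.
From mathcomp Require Import all_boot all_order all_algebra.
From mathcomp Require Import all_classical all_reals all_analysis.
Set Implicit Arguments. Unset Strict Implicit. Unset Printing Implicit Defensive.
Import Order.TTheory GRing.Theory Num.Theory.
Import numFieldNormedType.Exports.
Local Open Scope classical_set_scope.
Local Open Scope ring_scope.

Section Geo.
Variable R : realType.

Local Notation pt := (R * R)%type.

(* a non-vertical line y = a x + b is encoded by the pair (a, b) *)
Definition on_line (l : R * R) (p : pt) : Prop := p.2 = l.1 * p.1 + l.2.

Definition halfplane (a b c : R) : set pt := [set p | a * p.1 + b * p.2 <= c].

(* a (possibly unbounded) closed triangle: intersection of three closed
   half-planes, with nonempty interior *)
Definition is_triangle (S : set pt) : Prop :=
  (exists a1 b1 c1 a2 b2 c2 a3 b3 c3 : R,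
     S = halfplane a1 b1 c1 `&` halfplane a2 b2 c2 `&` halfplane a3 b3 c3)
  /\ (interior S !=set0).

Definition crosses (l : R * R) (S : set pt) : Prop :=
  exists p, interior S p /\ on_line l p.

Definition lies_above (l : R * R) (S : set pt) : Prop :=
  S `<=` [set p | l.1 * p.1 + l.2 <= p.2] /\ ~ crosses l S.

Definition is_cutting (X : seq (set pt)) : Prop :=
  [/\ (forall j, (j < size X)%N -> is_triangle (nth set0 X j)),
      (forall j j', (j < size X)%N -> (j' < size X)%N -> j <> j' ->
        interior (nth set0 X j) `&` interior (nth set0 X j') = set0)
    & forall p : pt, exists2 j, (j < size X)%N & nth set0 X j p].

Definition refines (X Y : seq (set pt)) : Prop :=
  (forall j, (j < size X)%N ->
     exists j', [/\ (j' < size Y)%N, nth set0 X j `<=` nth set0 Y j' &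
        forall j'', (j'' < size Y)%N -> nth set0 X j `<=` nth set0 Y j'' ->
           j'' = j'])
  /\ (forall j', (j' < size Y)%N ->
        nth set0 Y j' =
        [set p | exists2 j, (j < size X)%N &
                   nth set0 X j `<=` nth set0 Y j' /\ nth set0 X j p]).

Definition nchildren (X : seq (set pt)) (S : set pt) : nat :=
  count (fun T => `[< T `<=` S >]) X.

Definition ncross (P : seq (R * R)) (S : set pt) : nat :=
  count (fun l => `[< crosses l S >]) P.

Definition hierarchy (rho c C r : R) (P : seq (R * R)) (k : nat)
  (Xi : nat -> seq (set pt)) : Prop :=
  [/\ Xi 0%N = [:: setT] /\
      (forall i, (1 <= i <= k.+1)%N -> is_cutting (Xi i) /\ refines (Xi i) (Xi i.-1)),
      (forall i, (1 <= i <= k)%N -> (size (Xi i))%:R <= C * rho ^+ (2 * i)),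
      (forall i, (1 <= i <= k)%N -> forall j, (j < size (Xi i.-1))%N ->
         (nchildren (Xi i) (nth set0 (Xi i.-1) j))%:R <= c),
      (forall i, (1 <= i <= k)%N -> forall j, (j < size (Xi i))%N ->
         (ncross P (nth set0 (Xi i) j))%:R <= (size P)%:R / rho ^+ i)
    & (size (Xi k.+1))%:R <= C * r ^+ 2].

(* |Psi_+(l)|: cells of level i+1 (0 <= i <= k) that are children of a cell
   of level i crossed by l and that lie completely above l; counted per level *)
Definition psi_plus (k : nat) (Xi : nat -> seq (set pt)) (l : R * R) : nat :=
  \sum_(i < k.+1)
    count (fun T => `[< (exists2 j, (j < size (Xi i))%N &
                          crosses l (nth set0 (Xi i) j) /\ T `<=` nth set0 (Xi i) j)
                        /\ lies_above l T >]) (Xi i.+1).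

Definition psi_last (k : nat) (Xi : nat -> seq (set pt)) (l : R * R) : nat :=
  count (fun T => `[< crosses l T >]) (Xi k.+1).

End Geo.

From mathcomp Require Import all_boot all_order all_algebra.
From mathcomp Require Import all_classical all_reals all_analysis.
From mathcomp Require Import ring lra.
Set Implicit Arguments. Unset Strict Implicit. Unset Printing Implicit Defensive.
Import Order.TTheory GRing.Theory Num.Theory.
Local Open Scope classical_set_scope.
Local Open Scope ring_scope.

(* Double counting: a cell T of level i+1 is charged to a line l only when l
   crosses the unique parent of T, and at most m/rho^i lines do so.  Hence level
   i+1 contributes at most |Xi_{i+1}| m/rho^i <= C rho^2 m rho^i for i < k, a
   geometric sum dominated by C rho^2 m rho^k <= C rho^3 m r, while the last
   level (counted once in Psi_+ and once in Psi_{k+1}) contributes at most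
   |Xi_{k+1}| m/rho^k <= C r^2 m/r = C m r each time. *)

Lemma sum_count_exchange (A B : Type) (Q : A -> B -> bool) (P : seq A) (X : seq B) :
  (\sum_(l <- P) count (Q l) X = \sum_(T <- X) count (Q^~ T) P)%N.
Proof.
rewrite (eq_bigr (fun l => \sum_(T <- X) (Q l T : nat))); last first.
  by move=> l _; rewrite -sum1_count [LHS]big_mkcond; apply: eq_bigr => T _; case: ifP.
rewrite exchange_big; apply: eq_bigr => T _.
by rewrite -sum1_count [RHS]big_mkcond; apply: eq_bigr => l _; case: ifP.
Qed.

Lemma sum_count_le (R : numDomainType) (A : Type) (B : eqType)
    (Q : A -> B -> bool) (P : seq A) (X : seq B) (b : R) :
  (forall T, T \in X -> (count (Q^~ T) P)%:R <= b) ->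
  (\sum_(l <- P) count (Q l) X)%:R <= (size X)%:R * b.
Proof.
move=> countQ; rewrite sum_count_exchange natr_sum big_seq.
apply: le_trans (ler_sum _ (fun T => countQ T)) _.
rewrite big_const_seq (@eq_in_count _ _ predT) // count_predT iter_addr_0.
by rewrite mulr_natl.
Qed.

Lemma sum_expr_le_expr (R : realDomainType) (rho : R) (k : nat) :
  2 <= rho -> \sum_(i < k) rho ^+ i <= rho ^+ k.
Proof.
move=> rho_ge2; elim: k => [|k IHk]; first by rewrite big_ord0 expr0.
have : 0 <= rho ^+ k by apply: exprn_ge0; lra.
rewrite big_ord_recr /= exprS; nra.
Qed.

Section Cuttings.
Variable R : realType.
Local Notation pt := (R * R)%type.

Definition crosses_parent (Y : seq (set pt)) (l : R * R) (T : set pt) : bool :=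
  `[< exists2 j, (j < size Y)%N & crosses l (nth set0 Y j) /\ T `<=` nth set0 Y j >].

Lemma crossesS (l : R * R) (S T : set pt) : S `<=` T -> crosses l S -> crosses l T.
Proof. by move=> ST [p [Sp lp]]; exists p; split=> //; apply: interiorS Sp. Qed.

Lemma refines_parent (X Y : seq (set pt)) (T : set pt) : refines X Y -> T \in X ->
  exists2 j, (j < size Y)%N & [/\ T `<=` nth set0 Y j &
    forall j', (j' < size Y)%N -> T `<=` nth set0 Y j' -> j' = j].
Proof.
move=> [parent _] /(nthP set0) [t tX <-].
by have [j [jY sub uniq_j]] := parent t tX; exists j.
Qed.

Lemma crosses_parent_of_crosses (X Y : seq (set pt)) (l : R * R) (T : set pt) :
  refines X Y -> T \in X -> crosses l T -> crosses_parent Y l T.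
Proof.
move=> XY TX lT; have [j jY [sub _]] := refines_parent XY TX.
by apply/asboolP; exists j => //; split=> //; apply: crossesS lT.
Qed.

Lemma count_crosses_parent_le (X Y : seq (set pt)) (P : seq (R * R)) (T : set pt) :
  refines X Y -> T \in X ->
  exists2 j, (j < size Y)%N & (count (crosses_parent Y ^~ T) P <= ncross P (nth set0 Y j))%N.
Proof.
move=> XY TX; have [j jY [_ uniq_j]] := refines_parent XY TX.
exists j => //; apply: sub_count => l /asboolP [j' j'Y [lj' sub]].
by apply/asboolP; rewrite -(uniq_j j' j'Y sub).
Qed.

Lemma sum_count_crosses_parent_le (X Y : seq (set pt)) (P : seq (R * R)) (b : R) :
  refines X Y -> (forall j, (j < size Y)%N -> (ncross P (nth set0 Y j))%:R <= b) ->
  (\sum_(l <- P) count (crosses_parent Y l) X)%:R <= (size X)%:R * b.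
Proof.
move=> XY ncrossY; apply: sum_count_le => T TX.
have [j jY countT] := count_crosses_parent_le P XY TX.
by apply: le_trans (ncrossY j jY); rewrite ler_nat.
Qed.

Lemma sum_psi_plus_le (k : nat) (Xi : nat -> seq (set pt)) (P : seq (R * R)) :
  (\sum_(l <- P) psi_plus k Xi l
    <= \sum_(i < k.+1) \sum_(l <- P) count (crosses_parent (Xi i) l) (Xi i.+1))%N.
Proof.
rewrite /psi_plus exchange_big; apply: leq_sum => i _; apply: leq_sum => l _.
by apply: sub_count => T /asboolP [lT _]; apply/asboolP.
Qed.

Lemma psi_last_le (k : nat) (Xi : nat -> seq (set pt)) (l : R * R) :
  refines (Xi k.+1) (Xi k) ->
  (psi_last k Xi l <= count (crosses_parent (Xi k) l) (Xi k.+1))%N.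
Proof.
move=> refk; rewrite /psi_last.
rewrite (@eq_in_count _ _ (fun T => `[< crosses l T >] && crosses_parent (Xi k) l T)).
  by apply: sub_count => T /andP[].
move=> T TX /=; case: (boolP `[< crosses l T >]) => //= /asboolP lT.
by rewrite (crosses_parent_of_crosses refk TX lT).
Qed.

Lemma hierarchy_refines (rho c C r : R) (P : seq (R * R)) (k i : nat)
    (Xi : nat -> seq (set pt)) :
  hierarchy rho c C r P k Xi -> (i <= k)%N -> refines (Xi i.+1) (Xi i).
Proof. by move=> [[_ cuts] _ _ _ _] ik; case: (cuts i.+1). Qed.

Lemma hierarchy_ncross_le (rho c C r : R) (P : seq (R * R)) (k i : nat)
    (Xi : nat -> seq (set pt)) :
  hierarchy rho c C r P k Xi -> (i <= k)%N -> forall j, (j < size (Xi i))%N ->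
  (ncross P (nth set0 (Xi i) j))%:R <= (size P)%:R / rho ^+ i.
Proof.
move=> [_ _ _ ncrossXi _]; case: i => [_ j _ | i ik]; last by apply: ncrossXi.
by rewrite expr0 divr1 ler_nat count_size.
Qed.

Lemma hierarchy_level_le (rho c C r : R) (P : seq (R * R)) (k i : nat)
    (Xi : nat -> seq (set pt)) :
  hierarchy rho c C r P k Xi -> (i <= k)%N ->
  (\sum_(l <- P) count (crosses_parent (Xi i) l) (Xi i.+1))%:R
    <= (size (Xi i.+1))%:R * ((size P)%:R / rho ^+ i).
Proof.
move=> hier ik; apply: sum_count_crosses_parent_le (hierarchy_refines hier ik) _.
exact: hierarchy_ncross_le hier ik.
Qed.

End Cuttings.

Lemma sum_levels_le (R : realFieldType) (rho C m : R) (s : nat -> R) (k : nat) :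
  2 <= rho -> 0 <= C -> 0 <= m ->
  (forall i, (1 <= i <= k)%N -> s i <= C * rho ^+ (2 * i)) ->
  \sum_(i < k) s i.+1 * (m / rho ^+ i) <= C * rho ^+ 2 * m * rho ^+ k.
Proof.
move=> rho_ge2 C_ge0 m_ge0 sizes.
have rho_gt0 : 0 < rho by lra.
have term (i : 'I_k) : s i.+1 * (m / rho ^+ i) <= C * rho ^+ 2 * m * rho ^+ i.
  have m_rho_ge0 : 0 <= m / rho ^+ i by rewrite divr_ge0 // exprn_ge0 // ltW.
  apply: le_trans (ler_wpM2r m_rho_ge0 (sizes i.+1 _)) _; first by rewrite ltn_ord.
  rewrite (_ : C * rho ^+ (2 * i.+1) * (m / rho ^+ i) = C * rho ^+ 2 * m * rho ^+ i) //.
  by rewrite mulnS mul2n -addnn !exprD; field; rewrite expf_neq0 // gt_eqF.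
apply: le_trans (ler_sum _ (fun i _ => term i)) _.
rewrite -mulr_sumr ler_wpM2l ?sum_expr_le_expr //.
by rewrite mulr_ge0 // mulr_ge0 // exprn_ge0 // ltW.
Qed.

Lemma last_level_le (R : realFieldType) (rho C m r s : R) (k : nat) :
  0 < r -> r <= rho ^+ k -> 0 <= m -> 0 <= s -> s <= C * r ^+ 2 ->
  s * (m / rho ^+ k) <= C * m * r.
Proof.
move=> r_gt0 r_le m_ge0 s_ge0 s_le.
have rho_gt0 : 0 < rho ^+ k by apply: lt_le_trans r_le.
have m_div : m / rho ^+ k <= m / r by rewrite ler_wpM2l // lef_pV2 ?posrE.
apply: le_trans (ler_pM s_ge0 (divr_ge0 m_ge0 (ltW rho_gt0)) s_le m_div) _.
rewrite (_ : C * r ^+ 2 * (m / r) = C * m * r) //; field; exact: lt0r_neq0.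
Qed.

Theorem lemma5 (R : realType) (rho c C : R) :
  2 <= rho -> 1 <= c -> 1 <= C ->
  exists K : R, forall (P : seq (R * R)) (r : R) (k : nat)
    (Xi : nat -> seq (set (R * R))),
    uniq P ->
    1 <= r -> r <= (size P)%:R ->
    rho ^+ k / rho < r -> r <= rho ^+ k ->
    hierarchy rho c C r P k Xi ->
    (\sum_(l <- P) (psi_plus k Xi l + psi_last k Xi l)%N)%:R
      <= K * (size P)%:R * r.
Proof.
move=> rho_ge2 _ C_ge1; exists (C * (rho ^+ 3 + 2)).
move=> P r k Xi _ r_ge1 _ rk_lt rk_le hier.
have [_ sizes _ _ size_last] := hier.
set m : R := (size P)%:R.
have plus : (\sum_(l <- P) psi_plus k Xi l)%:R
    <= \sum_(i < k.+1) (size (Xi i.+1))%:R * (m / rho ^+ i).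
  apply: le_trans (_ : _ <= (\sum_(i < k.+1) \sum_(l <- P)
      count (crosses_parent (Xi i) l) (Xi i.+1))%:R) _.
    by rewrite ler_nat sum_psi_plus_le.
  by rewrite natr_sum; apply: ler_sum => i _; apply: hierarchy_level_le hier _; rewrite -ltnS.
have last : (\sum_(l <- P) psi_last k Xi l)%:R <= (size (Xi k.+1))%:R * (m / rho ^+ k).
  apply: le_trans (hierarchy_level_le hier (leqnn k)); rewrite ler_nat.
  by apply: leq_sum => l _; apply: psi_last_le (hierarchy_refines hier (leqnn k)).
have top := @last_level_le _ rho C m r _ k ltac:(lra) rk_le (ler0n _ _) (ler0n _ _) size_last.
have low := @sum_levels_le _ rho C m (fun i => (size (Xi i))%:R) k rho_ge2 ltac:(lra) (ler0n _ _) sizes.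
have growth : C * rho ^+ 2 * m * rho ^+ k <= C * rho ^+ 2 * m * (rho * r).
  have rhok : rho ^+ k <= rho * r by rewrite mulrC -ler_pdivrMr ?ltW //; lra.
  by rewrite ler_wpM2l // !mulr_ge0 // ?exprn_ge0; lra.
rewrite big_split natrD; apply: le_trans (lerD plus last) _.
rewrite big_ord_recr /= -addrA.
rewrite (_ : C * (rho ^+ 3 + 2) * m * r = C * rho ^+ 2 * m * (rho * r) + (C * m * r + C * m * r)).
  by apply: lerD; [exact: le_trans low growth | exact: lerD].
by rewrite exprS; ring.
Qed.
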